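(* Let $M\in\mathcal{M}$ be delay-free with $\mathrm{Supp}(M)=\{i_1,\dots,i_k\}$, where $i_1<\dots<i_k$, and denote the rows of $M$ by $M_1,\dots,M_n$. Then the following are equivalent: (a) The $k\times n$ matrix $\widetilde M$ with rows $M_{i_1},\dots,M_{i_k}$ is basic. (b) There exist row vectors $\widehat M_i\in\mathbb{F}[t]^{1\times n}$ for $i\in\{1,\dots,n\}\setminus\{i_1,\dots,i_k\}$ such that the matrix $N\in\mathbb{F}[t]^{n\times n}$ whose $i$-th row is $M_i$ for $i\in\{i_1,\dots,i_k\}$ and $\widehat M_i$ otherwise is a unit of the ring $\mathcal{M}$.
   Context: Let $\mathbb{F}$ be a finite field with $q$ elements and $n\geq 2$ a divisor of $q-1$. $\mathcal{M}=\{(m_{ab})\in\mathbb{F}[t]^{n\times n}\mid m_{ab}(0)=0\text{ for }1\le b<a\le n\}$, a subring of $\mathbb{F}[t]^{n\times n}$. For $M=(m_{ab})\in\mathcal{M}$, $\mathrm{Supp}(M)$ is the set of indices $a$ such that the $a$-th row of $M$ is nonzero, and $M$ is called delay-free if $m_{aa}(0)\ne0$ for all $a\in\mathrm{Supp}(M)$. A matrix $G\in\mathbb{F}[t]^{k\times n}$ is basic if $\mathrm{rank}\,G(\lambda)=k$ for all $\lambda$ in an algebraic closure of $\mathbb{F}$ (equivalently, its $k\times k$ minors are coprime). *)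

From HB Require Import structures.
From mathcomp Require Import all_boot all_order all_algebra all_field.
Set Implicit Arguments. Unset Strict Implicit. Unset Printing Implicit Defensive.
Import GRing.Theory.
Local Open Scope ring_scope.

Definition inM (F : fieldType) (n : nat) (M : 'M[{poly F}]_n) : bool :=
  [forall a : 'I_n, forall b : 'I_n, (b < a)%N ==> ((M a b).[0] == 0)].

Definition Supp (F : fieldType) (n : nat) (M : 'M[{poly F}]_n) : {set 'I_n} :=
  [set a | row a M != 0].

Definition delay_free (F : fieldType) (n : nat) (M : 'M[{poly F}]_n) : bool :=
  inM M && [forall a in Supp M, (M a a).[0] != 0].

(* G : k x n polynomial matrix is basic: rank G(lambda) = k for every lambda
   in an algebraically closed field extending F (in particular the algebraic
   closure), the extension being given by a ring morphism f. *)
Definition basic (F : fieldType) (k n : nat) (G : 'M[{poly F}]_(k, n)) : Prop :=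
  forall (L : closedFieldType) (f : {rmorphism F -> L}) (lam : L),
    \rank (map_mx (fun p => (map_poly f p).[lam]) G) = k.

Definition unit_M (F : fieldType) (n : nat) (N : 'M[{poly F}]_n) : Prop :=
  inM N /\ exists N' : 'M[{poly F}]_n,
    [/\ inM N', N *m N' = 1%:M & N' *m N = 1%:M].

Definition Mtilde (F : fieldType) (n : nat) (M : 'M[{poly F}]_n)
  : 'M[{poly F}]_(#|Supp M|, n) :=
  \matrix_(j < #|Supp M|, c < n) M (enum_val j) c.

From HB Require Import structures.
From mathcomp Require Import all_boot all_order all_algebra all_field.
From mathcomp Require Import perm zify.
Set Implicit Arguments. Unset Strict Implicit. Unset Printing Implicit Defensive.
Import GRing.Theory.
Local Open Scope ring_scope.

(* (b) => (a): the rows of a unimodular polynomial matrix remain linearly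
   independent after evaluation at any point of an algebraic closure of F.
   (a) => (b): the rows of M on its support are placed one at a time into a
   unimodular matrix N'.  In the coordinates of N', the part of the new row
   outside the rows already placed is, by Euclid's algorithm, g times a row of
   a unimodular matrix; at a root of g the new row would depend on the others,
   so basicness forces g to be a unit.  A constant left factor then makes the
   value at t = 0 equal to M(0) on Supp M and to the identity elsewhere, which
   delay-freeness makes upper triangular with nonzero diagonal; hence the
   completion and its inverse lie in the ring calM. *)

Lemma supp_mulmx_eq (R : pzSemiRingType) m n (U : {set 'I_m}) (c : 'rV[R]_m)
    (A B : 'M[R]_(m, n)) :
  (forall i, i \notin U -> c 0 i = 0) -> {in U, forall i, row i A = row i B} ->
  c *m A = c *m B.
Proof.
move=> cU AB; rewrite !mulmx_sum_row; apply: eq_bigr => i _.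
by case: (boolP (i \in U)) => iU; [rewrite AB | rewrite cU // !scale0r].
Qed.

Lemma mul_rV_delta_mx (R : pzSemiRingType) n p (u : 'rV[R]_n) i (j : 'I_p) :
  u *m delta_mx i j = u 0 i *: delta_mx 0 j.
Proof.
apply/rowP => k; rewrite !mxE (bigD1 i) //= big1 ?addr0 => [|l /negbTE li].
  by rewrite !mxE !eqxx.
by rewrite !mxE li mulr0.
Qed.

Lemma unitmx_map (R1 R2 : comUnitRingType) (g : {rmorphism R1 -> R2}) n
    (A : 'M[R1]_n) :
  A \in unitmx -> map_mx g A \in unitmx.
Proof. by rewrite !unitmxE det_map_mx; apply: rmorph_unit. Qed.

Lemma unitmx_upper_trig (K : fieldType) n (A : 'M[K]_n) :
  is_trig_mx A^T -> (forall i, A i i != 0) -> A \in unitmx.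
Proof.
move=> tA dA; rewrite -unitmx_tr unitmxE det_trig // unitfE.
by apply/prodf_neq0 => i _; rewrite mxE.
Qed.

Lemma trig_mx_inv (K : idomainType) n (A B : 'M[K]_n) :
  is_trig_mx A -> (forall i, A i i != 0) -> B *m A = 1%:M -> is_trig_mx B.
Proof.
move=> /is_trig_mxP tA dA BA; apply/is_trig_mxP => i j.
have [k] := ubnP (n - j); elim: k j => // k IH j hk ij.
have ji : (i == j) = false := ltn_eqF ij.
have := congr1 (fun C : 'M[K]_n => C i j) BA; rewrite !mxE (bigD1 j) //= big1 ?addr0.
  by rewrite ji => /eqP; rewrite mulf_eq0 (negbTE (dA j)) orbF => /eqP.
move=> l lj; case: (ltnP l j) => [lj' | jl]; first by rewrite tA ?mulr0.
have jl' : (j < l)%N by rewrite ltn_neqAle eq_sym lj jl.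
by rewrite IH ?mul0r //; [move: (ltn_ord l); lia | exact: ltn_trans ij jl'].
Qed.

Lemma unitmx_row_update (R : comUnitRingType) n (B : 'M[R]_n) s g (y : 'rV[R]_n) :
  B \in unitmx -> g \is a GRing.unit -> y 0 s = 0 ->
  exists2 N : 'M[R]_n, N \in unitmx &
    forall j, row j N = if j == s then g *: row s B + y *m B else row j B.
Proof.
move=> uB ug ys.
pose D := diag_mx (\row_i (if i == s then g else 1)).
pose E := 1%:M + delta_mx s 0 *m y.
have EK : E *m (1%:M - delta_mx s 0 *m y) = 1%:M.
  rewrite mulmxBr mulmx1 mulmxDl mul1mx -mulmxA (mulmxA y) mul_rV_delta_mx ys.
  by rewrite scale0r mul0mx mulmx0 addr0 addrK.
have uD : D \in unitmx.
  rewrite unitmxE det_diag (bigD1 s) //= big1 => [|i /negbTE si]; last by rewrite mxE si.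
  by rewrite mxE eqxx mulr1.
have yD : y *m D = y.
  by apply/rowP => j; rewrite mul_mx_diag !mxE; case: eqP => [->|]; rewrite ?ys ?mul0r ?mulr1.
have rowEj j : row j E = delta_mx 0 j + (j == s)%:R *: y.
  by apply/rowP => k; rewrite !mxE big_ord1 !mxE !eqxx andbT eq_sym.
have rowDB j : row j (D *m B) = (if j == s then g else 1) *: row j B.
  by apply/rowP => k; rewrite mul_diag_mx !mxE.
exists (E *m D *m B); first by rewrite !unitmx_mul (proj1 (mulmx1_unit EK)) uD uB.
move=> j; rewrite !row_mul rowEj !mulmxDl -!scalemxAl yD -rowE -row_mul rowDB.
by case: eqP => [->|_]; rewrite ?scale1r ?scale0r ?addr0.
Qed.

Definition rows_in (R : Type) m n (S : {set 'I_m}) (A : 'M[R]_(m, n)) : 'M[R]_(#|S|, n) :=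
  rowsub enum_val A.

Lemma map_rows_in (R1 R2 : Type) (g : R1 -> R2) m n (S : {set 'I_m}) (A : 'M[R1]_(m, n)) :
  map_mx g (rows_in S A) = rows_in S (map_mx g A).
Proof. by apply/matrixP => i j; rewrite !mxE. Qed.

Section RowsInField.
Variables (K : fieldType) (n : nat) (S : {set 'I_n}).
Local Notation sel := (rows_in S (1%:M : 'M[K]_n)).

Lemma rows_in1_mulmx_tr : sel *m sel^T = 1%:M.
Proof.
apply/matrixP => j j'; rewrite !mxE (bigD1 (enum_val j)) //= big1 ?addr0 => [|l jl].
  by rewrite !mxE eqxx mul1r (inj_eq enum_val_inj) eq_sym.
by rewrite !mxE eq_sym (negbTE jl) mul0r.
Qed.

Lemma rows_in1_tr_mulmx (c : 'rV[K]_n) :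
  (forall i, i \notin S -> c 0 i = 0) -> c *m sel^T *m sel = c.
Proof.
move=> cS; rewrite [RHS]row_sum_delta mulmx_sum_row.
have csel j : (c *m sel^T) 0 j = c 0 (enum_val j).
  rewrite !mxE (bigD1 (enum_val j)) //= big1 ?addr0 => [|i ji]; first by rewrite !mxE eqxx mulr1.
  by rewrite !mxE eq_sym (negbTE ji) mulr0.
under eq_bigr => j _ do rewrite csel /rows_in row_rowsub row1.
rewrite -(big_enum_val (A := mem S) (fun i => c 0 i *: delta_mx 0 i)) /=.
rewrite [RHS](bigID (mem S)) /= [X in _ + X]big1 ?addr0 // => i /cS ->.
by rewrite scale0r.
Qed.

Lemma rank_rows_in_unitmx (A : 'M[K]_n) : A \in unitmx -> \rank (rows_in S A) = #|S|.
Proof.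
move=> uA; rewrite /rows_in rowsubE mxrankMfree ?row_free_unit //.
apply/eqP; rewrite eqn_leq rank_leq_row /=.
by rewrite -{1}(mxrank1 K #|S|) -rows_in1_mulmx_tr mxrankM_maxl.
Qed.

Lemma rows_in_free (A : 'M[K]_n) (c : 'rV[K]_n) : \rank (rows_in S A) = #|S| ->
  (forall i, i \notin S -> c 0 i = 0) -> c *m A = 0 -> c = 0.
Proof.
move=> rk cS cA; have rf : row_free (rows_in S A) by rewrite /row_free rk.
suff c0 : c *m sel^T = 0 by rewrite -(rows_in1_tr_mulmx cS) c0 mul0mx.
apply: (row_free_inj rf); rewrite /= mul0mx [rows_in S A]rowsubE mulmxA.
by rewrite rows_in1_tr_mulmx.
Qed.
End RowsInField.

Section RowReduction.
Variables (F : fieldType) (n : nat) (T : {set 'I_n}) (s : 'I_n).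
Hypothesis sT : s \in T.

Definition unimodular_row_multiple (x : 'rV[{poly F}]_n) :=
  exists g (E : 'M[{poly F}]_n),
    [/\ E \in unitmx, {in ~: T, forall j, row j E = delta_mx 0 j} & x = g *: row s E].

Lemma unimodular_row_multiple_delta a c :
  a \in T -> unimodular_row_multiple (c *: delta_mx 0 a).
Proof.
move=> aT; exists c, (perm_mx (tperm s a)); rewrite unitmx_perm.
split=> // [j | ]; rewrite perm_mxEsub row_rowsub row1 ?tpermL //.
by rewrite inE => jT; rewrite tpermD //; apply: contraNneq jT => <-.
Qed.

Lemma unimodular_row_multiple_addrow (x : 'rV[{poly F}]_n) a b q :
  a != b -> b \in T ->
  unimodular_row_multiple (x - (q * x 0 b) *: delta_mx 0 a) ->
  unimodular_row_multiple x.
Proof.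
move=> ab bT [g [E [uE hE xE]]].
pose O := 1%:M + q *: (delta_mx b a : 'M[{poly F}]_n).
have OK : O *m (1%:M - q *: delta_mx b a) = 1%:M.
  rewrite mulmxBr mulmx1 mulmxDl mul1mx -scalemxAl -scalemxAr mul_delta_mx_cond.
  by rewrite (negbTE ab) mulr0n !scaler0 addr0 addrK.
have mulO (u : 'rV_n) : u *m O = u + (q * u 0 b) *: delta_mx 0 a.
  by rewrite mulmxDr mulmx1 -scalemxAr mul_rV_delta_mx scalerA.
exists g, (E *m O); split.
- by rewrite unitmx_mul uE (proj1 (mulmx1_unit OK)).
- move=> j jT; have jb : (j == b) = false by apply: contraTF jT => /eqP->; rewrite inE negbK.
  by rewrite row_mul hE // mulO mxE eq_sym jb mulr0 scale0r addr0.
- by rewrite row_mul scalemxAl -xE mulO !mxE eq_sym (negbTE ab) mulr0 subr0 subrK.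
Qed.

Lemma unimodular_row_multiple_exists (x : 'rV[{poly F}]_n) :
  (forall j, j \notin T -> x 0 j = 0) -> unimodular_row_multiple x.
Proof.
have [m] := ubnP (\sum_j size (x ord0 j))%N; elim: m x => // m IH x hm xT.
have [/existsP[a /existsP[b /and3P[ab xa xb]]] | single] :=
  boolP [exists a, exists b, [&& a != b, x 0 a != 0 & x 0 b != 0]].
- wlog ba : a b ab xa xb / (size (x ord0 b) <= size (x ord0 a))%N.
    move=> W; case: (leqP (size (x 0 b)) (size (x 0 a))) => h; first exact: W h.
    by apply: (W b a) => //; [rewrite eq_sym | exact: ltnW].
  have bT : b \in T by apply: contraLR xb => /xT ->; rewrite eqxx.
  apply: (unimodular_row_multiple_addrow (q := x 0 a %/ x 0 b) ab bT).
  set y := _ - _; have yE j : y 0 j = if j == a then x 0 a %% x 0 b else x 0 j.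
    rewrite !mxE eqxx /=; case: (j =P a) => [->|_]; last by rewrite mulr0 subr0.
    by rewrite mulr1 {1}(divp_eq (x 0 a) (x 0 b)) addrAC subrr add0r.
  apply: IH => [|j jT]; last by rewrite yE; case: eqP => [ja|_]; rewrite xT ?mod0p -?ja.
  rewrite ltnS in hm; apply: leq_trans hm; rewrite (bigD1 a) //= [X in (_ < X)%N](bigD1 a) //= yE eqxx.
  rewrite -addSn leq_add ?(leq_trans (ltn_modpN0 _ xb)) //.
  by apply: leq_sum => j /negbTE ja; rewrite yE ja.
- have [a xa | x0] := pickP (fun a => x 0 a != 0).
  + have aT : a \in T by apply: contraLR xa => /xT ->; rewrite eqxx.
    suff -> : x = x 0 a *: delta_mx 0 a by exact: unimodular_row_multiple_delta.
    apply/rowP => k; rewrite !mxE eqxx /=; case: (k =P a) => [-> | /eqP ka].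
      by rewrite mulr1.
    rewrite mulr0; apply/eqP; apply: contraR single => xk; apply/existsP; exists a.
    by apply/existsP; exists k; rewrite xa xk eq_sym ka.
  + suff -> : x = 0 *: delta_mx 0 s by exact: unimodular_row_multiple_delta.
    by apply/rowP => k; rewrite scale0r mxE; apply/eqP; rewrite -[_ == _]negbK x0.
Qed.
End RowReduction.

Section Completion.
Variables (F : fieldType) (L : closedFieldType) (f : {rmorphism F -> L}).
Variables (n : nat) (M : 'M[{poly F}]_n) (U : {set 'I_n}).
Local Notation ev lam := (horner_eval lam \o map_poly f).
Hypothesis M_basic : forall lam : L, \rank (rows_in U (map_mx (ev lam) M)) = #|U|.

Lemma unit_coef_row_decomposition s g (y w : 'rV[{poly F}]_n) :
  s \in U -> y 0 s = 0 -> (forall i, i \notin U -> y 0 i = 0) ->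
  row s M = y *m M + g *: w -> g \is a GRing.unit.
Proof.
move=> sU ys yU hs; apply/negPn/negP => gN.
have /closed_rootP[lam glam] : size (map_poly f g) != 1%N.
  rewrite size_map_poly; apply: contra gN => /eqP g1.
  have : lead_coef g != 0 by rewrite lead_coef_eq0 -size_poly_eq0 g1.
  by rewrite poly_unitE g1 /= unitfE lead_coefE g1.
pose c := delta_mx 0 s - map_mx (ev lam) y.
have c0 : c = 0.
  apply: (rows_in_free (M_basic lam)) => [i iU | ].
    have si : (i == s) = false by apply: contraNF iU => /eqP->.
    by rewrite !mxE si yU //= map_poly0 horner_evalE horner0 subr0.
  rewrite /c mulmxBl -rowE -map_row hs map_mxD map_mxM map_mxZ /= horner_evalE.
  by rewrite (rootP glam) scale0r addr0 subrr.
by have /rowP/(_ s)/eqP := c0; rewrite !mxE !eqxx ys rmorph0 subr0 oner_eq0.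
Qed.

Lemma unitmx_completion (S : {set 'I_n}) : S \subset U ->
  exists2 N : 'M[{poly F}]_n, N \in unitmx & {in S, forall j, row j N = row j M}.
Proof.
have [k] := ubnP #|S|; elim: k S => // k IH S hk SU.
case: (set_0Vmem S) => [-> | [s sS]]; first by exists 1%:M => [|j]; rewrite ?unitmx1 ?inE.
pose S' := S :\ s.
have [N' uN' rN'] : exists2 N' : 'M_n, N' \in unitmx & {in S', forall j, row j N' = row j M}.
  by apply: IH; [rewrite (cardsD1 s S) sS in hk | exact: subset_trans (subD1set S s) SU].
pose x := row s M *m invmx N'.
pose x2 := \row_j (if j \in S' then x 0 j else 0).
have x2S' i : i \notin S' -> x2 0 i = 0 by rewrite mxE => /negbTE->.
have x2s : x2 0 s = 0 by rewrite x2S' // setD11.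
have sS' : s \in ~: S' by rewrite inE setD11.
have [|g [E [uE hE xE]]] := unimodular_row_multiple_exists sS' (x := x - x2).
  by move=> j; rewrite inE negbK => jS'; rewrite !mxE jS' subrr.
pose B := E *m N'.
have rB : {in S', forall j, row j B = row j M}.
  move=> j jS'; rewrite row_mul hE ?setCK // -rowE rN' //.
have x2M : x2 *m M = x2 *m B by apply: (supp_mulmx_eq (U := S')) => // j /rB ->.
have hsB : row s M = x2 *m M + g *: row s B.
  rewrite row_mul scalemxAl -xE mulmxBl (supp_mulmx_eq (B := N') x2S') => [|j /rN' //].
  by rewrite addrC subrK mulmxKV.
have ug : g \is a GRing.unit.
  apply: unit_coef_row_decomposition hsB => // [|i iU]; first exact: subsetP SU s sS.
  by rewrite x2S' //; apply: contra iU => /setD1P[_ /(subsetP SU)].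
have uB : B \in unitmx by rewrite unitmx_mul uE.
have [N uN rN] := unitmx_row_update uB ug x2s.
exists N => // j jS; rewrite rN -/B; case: eqP => [-> | /eqP js]; first by rewrite hsB x2M addrC.
by rewrite rB // !inE js.
Qed.
End Completion.

Section ConstantTerm.
Variables (F : fieldType) (n : nat).
Local Notation ev0 := (horner_eval (0 : F)).

Lemma inM_trig (A : 'M[{poly F}]_n) : inM A = is_trig_mx (map_mx ev0 A)^T.
Proof.
apply/forallP/is_trig_mxP => [hA i j ij | hA a].
  by have /forallP/(_ i)/implyP/(_ ij)/eqP := hA j; rewrite !mxE horner_evalE.
apply/forallP => b; apply/implyP => ba.
by have := hA b a ba; rewrite !mxE horner_evalE => ->.
Qed.

Lemma unit_M_const (N : 'M[{poly F}]_n) (P : 'M[F]_n) :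
  N \in unitmx -> map_mx ev0 N = P -> is_trig_mx P^T -> (forall a, P a a != 0) ->
  unit_M N.
Proof.
move=> uN NP tP dP; split; first by rewrite inM_trig NP.
exists (invmx N); split; [|exact: mulmxV|exact: mulVmx].
rewrite inM_trig; apply: (trig_mx_inv tP) => [i|]; first by rewrite mxE.
by rewrite -trmx_mul -NP -map_mxM mulmxV // map_mx1 trmx1.
Qed.

Lemma adjust_const (S : {set 'I_n}) (N0 : 'M[{poly F}]_n) (P : 'M[F]_n) :
  N0 \in unitmx -> P \in unitmx -> {in S, forall i, row i P = row i (map_mx ev0 N0)} ->
  exists2 N : 'M[{poly F}]_n, N \in unitmx /\ map_mx ev0 N = P &
    {in S, forall i, row i N = row i N0}.
Proof.
move=> uN0 uP rP; pose C := P *m invmx (map_mx ev0 N0).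
have uN00 : map_mx ev0 N0 \in unitmx := unitmx_map ev0 uN0.
exists (map_mx polyC C *m N0); first split.
- by rewrite unitmx_mul uN0 andbT unitmx_map // unitmx_mul uP unitmx_inv.
- have CE : map_mx ev0 (map_mx polyC C) = C.
    by apply/matrixP => i j; rewrite !mxE horner_evalE hornerC.
  by rewrite map_mxM CE mulmxKV.
- by move=> i iS; rewrite row_mul -map_row row_mul rP // rowE mulmxK // map_delta_mx -rowE.
Qed.
End ConstantTerm.

Section ConstCompletion.
Variables (F : fieldType) (n : nat) (M : 'M[{poly F}]_n).

Definition const_completion : 'M[F]_n :=
  \matrix_(i, j) if i \in Supp M then (M i j).[0] else (i == j)%:R.

Lemma const_completion_trig : inM M -> is_trig_mx const_completion^T.
Proof.
rewrite inM_trig => /is_trig_mxP tM; apply/is_trig_mxP => i j ij.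
have ji : (j == i) = false := gtn_eqF ij.
rewrite !mxE; case: ifP => _; last by rewrite ji.
by have := tM i j ij; rewrite !mxE horner_evalE.
Qed.

Lemma const_completion_diag : delay_free M -> forall a, const_completion a a != 0.
Proof.
case/andP=> _ /forallP dM a; rewrite mxE; case: ifP => aS; last by rewrite eqxx oner_eq0.
exact: (implyP (dM a)).
Qed.

Lemma row_const_completion i :
  i \in Supp M -> row i const_completion = row i (map_mx (horner_eval 0) M).
Proof. by move=> iS; apply/rowP => j; rewrite !mxE iS horner_evalE. Qed.
End ConstCompletion.

Lemma Mtilde_rows_in (F : fieldType) n (M : 'M[{poly F}]_n) : Mtilde M = rows_in (Supp M) M.
Proof. by apply/matrixP => i j; rewrite !mxE. Qed.

Lemma basic_rows_in_unitmx (F : fieldType) n (S : {set 'I_n}) (N : 'M[{poly F}]_n) :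
  N \in unitmx -> basic (rows_in S N).
Proof.
move=> uN L f lam; rewrite map_rows_in.
exact: (rank_rows_in_unitmx _ (unitmx_map (horner_eval lam \o map_poly f) uN)).
Qed.

Theorem lemma3p14 (F : finFieldType) (n : nat)
  (hn2 : (2 <= n)%N) (hnq : (n %| #|F|.-1)%N)
  (M : 'M[{poly F}]_n) (hM : inM M) (hdf : delay_free M) :
  basic (Mtilde M) <->
  exists Mhat : 'I_n -> 'rV[{poly F}]_n,
    unit_M (\matrix_(i < n) (if i \in Supp M then row i M else Mhat i)).
Proof.
rewrite Mtilde_rows_in; split => [Mb | [Mhat [_ [N' [_ NN' _]]]]].
- have [L [f _]] := countable_algebraic_closure F.
  have MbL lam : \rank (rows_in (Supp M) (map_mx (horner_eval lam \o map_poly f) M)) = #|Supp M|.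
    by have := Mb L f lam; rewrite map_rows_in.
  have [N0 uN0 rN0] := unitmx_completion MbL (subxx _).
  have uP := unitmx_upper_trig (const_completion_trig hM) (const_completion_diag hdf).
  have [N [uN NP] rN] : exists2 N, N \in unitmx /\ map_mx (horner_eval 0) N = const_completion M &
      {in Supp M, forall i, row i N = row i N0}.
    by apply: adjust_const uN0 uP _ => i iS; rewrite row_const_completion // -!map_row rN0.
  exists (fun i => row i N); rewrite (_ : \matrix_i _ = N).
    exact: unit_M_const uN NP (const_completion_trig hM) (const_completion_diag hdf).
  by apply/row_matrixP => i; rewrite rowK; case: ifPn => // iS; rewrite rN // rN0.
- set N := \matrix_i _ in NN'.
  rewrite (_ : rows_in _ M = rows_in (Supp M) N).
    exact/basic_rows_in_unitmx/(proj1 (mulmx1_unit NN')).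
  by apply/matrixP => j c; rewrite !mxE (enum_valP j) mxE.
Qed.
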